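(* Let $G$ be a graph and $U \subseteq V(G)$. Suppose $G$ has a minor with countable branch sets which is a barricade with bipartition $(A,B)$ such that for every $b\in B$ the branch set of $b$ contains a vertex of $U$. Then $G$ has a $U$-rooted minor with countable branch sets that is a barricade.
   Context: A barricade is a bipartite graph with bipartition $(A,B)$ such that $|A|<|B|$ and every vertex of $B$ has infinitely many neighbours in $A$. Minors are given by disjoint connected branch sets; a minor is $U$-rooted if every branch set contains a vertex of $U$. *)

From Stdlib Require Import List Relations.
Set Implicit Arguments.

Definition simple_graph (V : Type) (adj : V -> V -> Prop) : Prop :=
  (forall x y, adj x y -> adj y x) /\ (forall x, ~ adj x x).

Definition card_le (V W : Type) (A : V -> Prop) (B : W -> Prop) : Prop :=
  exists f : {x | A x} -> {y | B y}, forall u v, f u = f v -> u = v.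
Definition card_lt (V W : Type) (A : V -> Prop) (B : W -> Prop) : Prop :=
  card_le A B /\ ~ card_le B A.

Definition finite_set (V : Type) (S : V -> Prop) : Prop :=
  exists l : list V, forall x, S x -> In x l.

(* countable = finite or countably infinite *)
Definition countable_set (V : Type) (S : V -> Prop) : Prop :=
  exists f : V -> nat, forall x y, S x -> S y -> f x = f y -> x = y.

(* S induces a connected subgraph (S is also required nonempty in minor_model) *)
Definition connected_in (V : Type) (adj : V -> V -> Prop) (S : V -> Prop) : Prop :=
  forall x y, S x -> S y ->
    clos_refl_trans V (fun u v => S u /\ S v /\ adj u v) x y.

(* br w is the branch set of the vertex w of H in G. *)
Definition minor_model (V W : Type) (adjG : V -> V -> Prop) (adjH : W -> W -> Prop)
  (br : W -> V -> Prop) : Prop :=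
  (forall w, exists v, br w v) /\
  (forall w1 w2 v, br w1 v -> br w2 v -> w1 = w2) /\
  (forall w, connected_in adjG (br w)) /\
  (forall w1 w2, adjH w1 w2 -> exists v1 v2, br w1 v1 /\ br w2 v2 /\ adjG v1 v2).

Definition rooted (V W : Type) (U : V -> Prop) (br : W -> V -> Prop) : Prop :=
  forall w, exists u, U u /\ br w u.

Definition barricade (W : Type) (adjH : W -> W -> Prop) (A B : W -> Prop) : Prop :=
  (forall w, A w \/ B w) /\ (forall w, ~ (A w /\ B w)) /\
  (forall x y, adjH x y -> (A x /\ B y) \/ (B x /\ A y)) /\
  card_lt A B /\
  (forall b, B b -> ~ finite_set (fun a => A a /\ adjH a b)).

Definition is_barricade (W : Type) (adjH : W -> W -> Prop) : Prop :=
  exists A B : W -> Prop, barricade adjH A B.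

(* Choose a maximal family of pairwise disjoint cherries a - b - a' of the
   barricade H, with a <> a' in A and b in B.  Contracting every cherry to a single
   vertex and keeping the B-vertices covered by no cherry gives a bipartite minor
   H' of H, hence of G, each of whose branch sets contains a vertex of B and
   therefore of U.  H' is again a barricade.  An injection of the uncovered
   B-vertices into the cherries would inject B into A: send a covered b to the
   first leg of its cherry and an uncovered b to the second leg of its image.  By
   maximality an uncovered b has at most one uncovered A-neighbour, so its
   infinitely many A-neighbours lie on infinitely many cherries. *)

From Stdlib Require Import List Relations Classical ClassicalEpsilon ProofIrrelevance Cantor.
From mathcomp Require classical_sets.

Set Implicit Arguments.

Lemma finite_set_subset (V : Type) (S T : V -> Prop) :
  (forall x, S x -> T x) -> finite_set T -> finite_set S.
Proof. intros HST [l Hl]. exists l. auto. Qed.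

Lemma finite_set_union (V : Type) (S T : V -> Prop) :
  finite_set S -> finite_set T -> finite_set (fun x => S x \/ T x).
Proof.
  intros [l Hl] [m Hm]. exists (l ++ m).
  intros x [Sx | Tx]; apply in_or_app; auto.
Qed.

Lemma finite_set_subsingleton (V : Type) (S : V -> Prop) :
  (forall x y, S x -> S y -> x = y) -> finite_set S.
Proof.
  intros HS. destruct (classic (exists x, S x)) as [[x Sx] | Hempty].
  - exists (x :: nil). intros y Sy. left. exact (HS x y Sx Sy).
  - exists nil. intros y Sy. apply Hempty. exists y. exact Sy.
Qed.

Lemma finite_set_bigcup (I V : Type) (D : I -> Prop) (F : I -> V -> Prop) :
  finite_set D -> (forall i, D i -> finite_set (F i)) ->
  finite_set (fun x => exists i, D i /\ F i x).
Proof.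
  intros [l Hl] HF.
  apply finite_set_subset with (T := fun x => exists i, In i l /\ D i /\ F i x).
  { intros x [i [Di Fix]]. exists i. auto. }
  clear Hl. induction l as [| i l IH].
  - exists nil. intros x [i [[] _]].
  - apply finite_set_subset
      with (T := fun x => (D i /\ F i x) \/ exists j, In j l /\ D j /\ F j x).
    + intros x [j [[<- | Hj] HFj]]; [left | right; exists j]; tauto.
    + apply finite_set_union; [| exact IH].
      destruct (classic (D i)) as [Di | nDi].
      * apply finite_set_subset with (T := F i); [tauto | exact (HF i Di)].
      * exists nil. tauto.
Qed.

Lemma countable_set_finite (V : Type) (S : V -> Prop) :
  finite_set S -> countable_set S.
Proof.
  intros [l Hl].
  assert (Hpos : forall x, {n | S x -> nth_error l n = Some x}).
  { intro x. apply constructive_indefinite_description.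
    destruct (classic (S x)) as [Sx | nSx].
    - destruct (In_nth_error l x (Hl x Sx)) as [n Hn]. exists n. auto.
    - exists 0. contradiction. }
  exists (fun x => proj1_sig (Hpos x)). intros x y Sx Sy E.
  destruct (Hpos x) as [n Hn], (Hpos y) as [m Hm]. simpl in E. subst m.
  rewrite (Hn Sx) in Hm. specialize (Hm Sy). congruence.
Qed.

Lemma countable_set_bigcup (I V : Type) (D : I -> Prop) (F : I -> V -> Prop) :
  countable_set D -> (forall i, D i -> countable_set (F i)) ->
  countable_set (fun x => exists i, D i /\ F i x).
Proof.
  intros [g Hg] HF.
  assert (Hcode : forall i, {f : V -> nat |
            D i -> forall x y, F i x -> F i y -> f x = f y -> x = y}).
  { intro i. apply constructive_indefinite_description.
    destruct (classic (D i)) as [Di | nDi].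
    - destruct (HF i Di) as [f Hf]. exists f. auto.
    - exists (fun _ => 0). contradiction. }
  exists (fun x => match excluded_middle_informative (exists i, D i /\ F i x) with
           | left h => let i := proj1_sig (constructive_indefinite_description _ h) in
                       to_nat (g i, proj1_sig (Hcode i) x)
           | right _ => 0
           end).
  intros x y Hx Hy E. cbv beta in E.
  destruct (excluded_middle_informative (exists i, D i /\ F i x)) as [hx | ];
    [| contradiction].
  destruct (excluded_middle_informative (exists i, D i /\ F i y)) as [hy | ];
    [| contradiction].
  destruct (constructive_indefinite_description _ hx) as [i [Di Fix]].
  destruct (constructive_indefinite_description _ hy) as [j [Dj Fjy]].
  cbn -[to_nat] in E. apply (f_equal of_nat) in E. rewrite !cancel_of_to in E.
  injection E as Eij Exy. apply Hg in Eij; [subst j | assumption | assumption].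
  destruct (Hcode i) as [f Hf]. exact (Hf Di x y Fix Fjy Exy).
Qed.

Section MaximalDisjoint.

Variables (T I : Type) (F : I -> T -> Prop) (E D : I -> Prop).
Hypothesis E_max : classical_sets.maximal_disjoint_subcollection F E D.

Lemma maximal_disjoint_sub i : E i -> D i.
Proof. destruct E_max as [ED _ _]. exact (ED i). Qed.

Lemma maximal_disjoint_eq i j z : E i -> E j -> F i z -> F j z -> i = j.
Proof.
  destruct E_max as [_ Etriv _]. intros Ei Ej Fiz Fjz.
  apply (Etriv i j Ei Ej). exists z. split; assumption.
Qed.

Lemma maximal_disjoint_mem i :
  D i -> (forall j z, E j -> F i z -> F j z -> False) -> E i.
Proof.
  destruct E_max as [ED Etriv Emax]. intros Di Hdisj.
  apply NNPP. intro nEi.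
  apply (Emax (fun j => E j \/ j = i)).
  - split; [intros j Ej; left; exact Ej |].
    intro Hsub. exact (nEi (Hsub i (or_intror eq_refl))).
  - intros j [Ej | ->]; [exact (ED j Ej) | exact Di].
  - intros j k Hj Hk [z [Fjz Fkz]].
    destruct Hj as [Ej | ->], Hk as [Ek | ->].
    + exact (Etriv j k Ej Ek (ex_intro _ z (conj Fjz Fkz))).
    + destruct (Hdisj j z Ej Fkz Fjz).
    + destruct (Hdisj k z Ek Fjz Fkz).
    + reflexivity.
Qed.

End MaximalDisjoint.

Lemma card_le_of_rel (S T : Type) (X : S -> Prop) (Y : T -> Prop) (R : S -> T -> Prop) :
  (forall x, X x -> exists y, Y y /\ R x y) ->
  (forall x x' y, X x -> X x' -> R x y -> R x' y -> x = x') ->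
  card_le X Y.
Proof.
  intros Htot Hinj.
  assert (Himg : forall s : {x | X x}, {y | Y y /\ R (proj1_sig s) y}).
  { intros [x Xx]. apply constructive_indefinite_description. exact (Htot x Xx). }
  exists (fun s => exist Y (proj1_sig (Himg s)) (proj1 (proj2_sig (Himg s)))).
  intros u v E. apply (f_equal (@proj1_sig _ _)) in E. simpl in E.
  destruct (Himg u) as [y [Yy Ruy]], (Himg v) as [y' [Yy' Rvy]]. simpl in E. subst y'.
  apply eq_sig_hprop; [intros; apply proof_irrelevance |].
  exact (Hinj _ _ y (proj2_sig u) (proj2_sig v) Ruy Rvy).
Qed.

(* A maximal matching of the complete bipartite graph between [X] and [Y]
   saturates one of the two sides. *)
Lemma card_le_total (S T : Type) (X : S -> Prop) (Y : T -> Prop) :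
  card_le X Y \/ card_le Y X.
Proof.
  pose (ends (p : S * T) (z : S + T) := z = inl (fst p) \/ z = inr (snd p)).
  destruct (classical_sets.ex_maximal_disjoint_subcollection ends
              (fun p => X (fst p) /\ Y (snd p))) as [M M_max].
  assert (M_inj : forall x y x' y',
            M (x, y) -> M (x', y') -> x = x' \/ y = y' -> x = x' /\ y = y').
  { intros x y x' y' Mp Mq Hshare.
    assert (E : (x, y) = (x', y')).
    { destruct Hshare as [<- | <-].
      - apply (maximal_disjoint_eq M_max) with (z := inl x); unfold ends; simpl; auto.
      - apply (maximal_disjoint_eq M_max) with (z := inr y); unfold ends; simpl; auto. }
    injection E. auto. }
  destruct (classic (forall x, X x -> exists y, M (x, y)))
    as [Xsat | [x0 Hx0]%not_all_ex_not].
  - left. apply card_le_of_rel with (R := fun x y => M (x, y)).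
    + intros x Xx. destruct (Xsat x Xx) as [y Mxy]. exists y. split; [|exact Mxy].
      exact (proj2 (maximal_disjoint_sub M_max _ Mxy)).
    + intros x x' y _ _ Mxy Mx'y. apply (M_inj x y x' y); auto.
  - apply imply_to_and in Hx0. destruct Hx0 as [Xx0 Hx0].
    right. apply card_le_of_rel with (R := fun y x => M (x, y)).
    + intros y Yy. apply NNPP. intro Hy.
      apply Hx0. exists y. apply (maximal_disjoint_mem M_max); [split; assumption |].
      intros [x y'] z Mq [-> | ->] [E | E]; simpl in E;
        try discriminate E; injection E as <-.
      * apply Hx0. exists y'. exact Mq.
      * apply Hy. exists x.
        split; [exact (proj1 (maximal_disjoint_sub M_max _ Mq)) | exact Mq].
    + intros y y' x _ _ Mxy Mxy'. apply (M_inj x y x y'); auto.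
Qed.

Lemma clos_rt_restrict_mono (V : Type) (adj : V -> V -> Prop) (S S' : V -> Prop) x y :
  (forall v, S v -> S' v) ->
  clos_refl_trans V (fun u v => S u /\ S v /\ adj u v) x y ->
  clos_refl_trans V (fun u v => S' u /\ S' v /\ adj u v) x y.
Proof.
  intros HS P. induction P as [u v (Su & Sv & a) | u | u m v _ IH1 _ IH2].
  - apply rt_step. auto.
  - apply rt_refl.
  - apply rt_trans with m; assumption.
Qed.

Lemma connected_in_bigcup (V W : Type) (adjG : V -> V -> Prop) (adjH : W -> W -> Prop)
  (br : W -> V -> Prop) (D : W -> Prop) :
  (forall w, connected_in adjG (br w)) ->
  (forall w1 w2, adjH w1 w2 -> exists v1 v2, br w1 v1 /\ br w2 v2 /\ adjG v1 v2) ->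
  connected_in adjH D -> connected_in adjG (fun v => exists w, D w /\ br w v).
Proof.
  intros br_conn br_edge D_conn x y [w [Dw Bx]] [w' [Dw' By]].
  pose proof (clos_rt_rt1n _ _ _ _ (D_conn w w' Dw Dw')) as P. clear D_conn Dw'.
  revert x Dw Bx.
  induction P as [u | u m w' (_ & Dm & a) _ IH]; intros x Du Bx.
  - apply clos_rt_restrict_mono with (S := br u); [eauto | exact (br_conn u x y Bx By)].
  - destruct (br_edge u m a) as [v1 [v2 (B1 & B2 & a12)]].
    apply rt_trans with v1; [| apply rt_trans with v2].
    + apply clos_rt_restrict_mono with (S := br u); [eauto | exact (br_conn u x v1 Bx B1)].
    + apply rt_step. split; [| split]; eauto.
    + exact (IH By v2 Dm B2).
Qed.

Lemma minor_model_trans (V W K : Type) (adjG : V -> V -> Prop) (adjH : W -> W -> Prop)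
  (adjK : K -> K -> Prop) (br : W -> V -> Prop) (brH : K -> W -> Prop) :
  minor_model adjG adjH br -> minor_model adjH adjK brH ->
  minor_model adjG adjK (fun k v => exists w, brH k w /\ br w v).
Proof.
  intros (br_ne & br_disj & br_conn & br_edge) (brH_ne & brH_disj & brH_conn & brH_edge).
  split; [| split; [| split]].
  - intro k. destruct (brH_ne k) as [w Hw]. destruct (br_ne w) as [v Hv]. eauto.
  - intros k1 k2 v [w1 [H1 B1]] [w2 [H2 B2]].
    apply (brH_disj k1 k2 w1 H1). rewrite (br_disj w1 w2 v B1 B2). exact H2.
  - intro k. apply connected_in_bigcup with (adjH := adjH); auto.
  - intros k1 k2 a.
    destruct (brH_edge k1 k2 a) as [w1 [w2 (H1 & H2 & aw)]].
    destruct (br_edge w1 w2 aw) as [v1 [v2 (B1 & B2 & av)]].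
    exists v1, v2. split; [| split]; eauto.
Qed.

Definition is_inl (S T : Type) (w : S + T) : Prop :=
  match w with inl _ => True | inr _ => False end.
Definition is_inr (S T : Type) (w : S + T) : Prop :=
  match w with inl _ => False | inr _ => True end.

Lemma card_le_inr_inl (S T : Type) :
  card_le (@is_inr S T) (@is_inl S T) ->
  exists g : T -> S, forall t t', g t = g t' -> t = t'.
Proof.
  intros [f f_inj].
  assert (Hg : forall t, {s | proj1_sig (f (exist _ (inr t) I)) = inl s}).
  { intro t. destruct (f (exist _ (inr t) I)) as [[s | t'] h];
      [exists s; reflexivity | destruct h]. }
  exists (fun t => proj1_sig (Hg t)). intros t t' E.
  destruct (Hg t) as [s Es], (Hg t') as [s' Es']. simpl in E. subst s'.
  rewrite <- Es' in Es. apply (eq_sig_hprop (fun _ => proof_irrelevance _)), f_inj in Es.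
  injection Es as E. exact E.
Qed.

Record cherry (W : Type) := Cherry { leg1 : W; leg2 : W; centre : W }.

Section CherryContraction.

Variables (W : Type) (adjH : W -> W -> Prop) (A B : W -> Prop).
Hypothesis adjH_sym : forall x y, adjH x y -> adjH y x.
Hypothesis AB_barricade : barricade adjH A B.

Definition on_cherry (c : cherry W) (x : W) : Prop :=
  x = leg1 c \/ x = leg2 c \/ x = centre c.

Definition is_cherry (c : cherry W) : Prop :=
  A (leg1 c) /\ A (leg2 c) /\ B (centre c) /\ leg1 c <> leg2 c /\
  adjH (leg1 c) (centre c) /\ adjH (leg2 c) (centre c).

Lemma cherry_connected c : is_cherry c -> connected_in adjH (on_cherry c).
Proof.
  intros (_ & _ & _ & _ & a1 & a2).
  assert (Hcentre : forall x, on_cherry c x ->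
    clos_refl_trans W (fun u v => on_cherry c u /\ on_cherry c v /\ adjH u v) x (centre c) /\
    clos_refl_trans W (fun u v => on_cherry c u /\ on_cherry c v /\ adjH u v) (centre c) x).
  { unfold on_cherry.
    intros x [-> | [-> | ->]]; split; solve [apply rt_refl | apply rt_step; auto 7]. }
  intros x y Hx Hy.
  apply rt_trans with (centre c); [apply Hcentre | apply Hcentre]; assumption.
Qed.

Variable X : cherry W -> Prop.
Hypothesis X_max : classical_sets.maximal_disjoint_subcollection on_cherry X is_cherry.

Definition covered (x : W) : Prop := exists c, X c /\ on_cherry c x.

Lemma uncovered_neighbour_unique b a a' :
  B b -> ~ covered b -> A a -> ~ covered a -> adjH a b ->
  A a' -> ~ covered a' -> adjH a' b -> a = a'.
Proof.
  intros Bb nb Aa na ab Aa' na' a'b. apply NNPP. intro ne.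
  apply nb. exists (Cherry a a' b). split; [| right; right; reflexivity].
  apply (maximal_disjoint_mem X_max); [repeat split; assumption |].
  intros c x Xc [-> | [-> | ->]] Hx; simpl in Hx.
  - apply na. exists c. auto.
  - apply na'. exists c. auto.
  - apply nb. exists c. auto.
Qed.

Definition packed := {c | X c}.
Definition uncovered := {b | B b /\ ~ covered b}.
Definition node := (packed + uncovered)%type.

Definition merged (w : node) : W -> Prop :=
  match w with
  | inl c => on_cherry (proj1_sig c)
  | inr b => eq (proj1_sig b)
  end.

(* Bipartiteness is imposed explicitly: the edges inside a cherry would otherwise
   make its contraction a loop. *)
Definition node_adj (w1 w2 : node) : Prop :=
  (is_inl w1 /\ is_inr w2 \/ is_inr w1 /\ is_inl w2) /\
  exists x1 x2, merged w1 x1 /\ merged w2 x2 /\ adjH x1 x2.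

Lemma node_adj_simple : simple_graph node_adj.
Proof.
  split.
  - intros w1 w2 [Hside [x1 [x2 (H1 & H2 & a)]]]. split; [tauto |]. exists x2, x1. auto.
  - intros w [[[H1 H2] | [H1 H2]] _]; destruct w; contradiction.
Qed.

Lemma merged_minor_model : minor_model adjH node_adj merged.
Proof.
  split; [| split; [| split]].
  - intros [c | b]; [exists (leg1 (proj1_sig c)); left | exists (proj1_sig b)]; reflexivity.
  - intros [c | b] [c' | b'] x Hx Hx'; simpl in Hx, Hx'.
    + f_equal. apply (eq_sig_hprop (fun _ => proof_irrelevance _)).
      exact (maximal_disjoint_eq X_max _ _ _ (proj2_sig c) (proj2_sig c') Hx Hx').
    + subst x. destruct (proj2 (proj2_sig b')).
      exists (proj1_sig c). split; [apply proj2_sig | exact Hx].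
    + subst x. destruct (proj2 (proj2_sig b)).
      exists (proj1_sig c'). split; [apply proj2_sig | exact Hx'].
    + f_equal. apply (eq_sig_hprop (fun _ => proof_irrelevance _)). congruence.
  - intros [c | b].
    + apply cherry_connected, (maximal_disjoint_sub X_max), proj2_sig.
    + intros x y <- <-. apply rt_refl.
  - intros w1 w2 [_ Hedge]. exact Hedge.
Qed.

Lemma merged_finite w : finite_set (merged w).
Proof.
  destruct w as [[c Xc] | [b Hb]]; simpl.
  - exists (leg1 c :: leg2 c :: centre c :: nil). unfold on_cherry. simpl. intuition.
  - exists (b :: nil). simpl. auto.
Qed.

Lemma merged_meets_B w : exists x, B x /\ merged w x.
Proof.
  destruct w as [[c Xc] | [b Hb]].
  - exists (centre c).
    split; [apply (maximal_disjoint_sub X_max _ Xc) | right; right; reflexivity].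
  - exists b. split; [exact (proj1 Hb) | reflexivity].
Qed.

Lemma card_le_of_uncovered_inj (g : uncovered -> packed) :
  (forall b b', g b = g b' -> b = b') -> card_le B A.
Proof.
  intros g_inj. destruct AB_barricade as (_ & AB_disj & _).
  apply card_le_of_rel with (R := fun b a =>
    (exists c, X c /\ centre c = b /\ leg1 c = a) \/
    (exists h : B b /\ ~ covered b, leg2 (proj1_sig (g (exist _ b h))) = a)).
  - intros b Bb. destruct (classic (covered b)) as [[c [Xc Hb]] | nb].
    + destruct (maximal_disjoint_sub X_max _ Xc) as (A1 & A2 & _).
      destruct Hb as [-> | [-> | ->]].
      * destruct (AB_disj _ (conj A1 Bb)).
      * destruct (AB_disj _ (conj A2 Bb)).
      * exists (leg1 c). split; [exact A1 | left; exists c; auto].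
    + set (c := g (exist _ b (conj Bb nb))).
      exists (leg2 (proj1_sig c)). split.
      * apply (maximal_disjoint_sub X_max), proj2_sig.
      * right. exists (conj Bb nb). reflexivity.
  - assert (leg1_leg2 : forall c c' a, X c -> X c' -> leg1 c = a -> leg2 c' = a -> False).
    { intros c c' a Xc Xc' <- E.
      assert (c' = c) as ->.
      { apply (maximal_disjoint_eq X_max _ _ (leg1 c) Xc' Xc); unfold on_cherry; auto. }
      destruct (maximal_disjoint_sub X_max _ Xc) as (_ & _ & _ & ne & _). auto. }
    intros b b' a _ _ [[c [Xc [<- Ea]]] | [h Ea]] [[c' [Xc' [<- Ea']]] | [h' Ea']].
    + f_equal. apply (maximal_disjoint_eq X_max _ _ a Xc Xc'); unfold on_cherry; auto.
    + destruct (leg1_leg2 _ _ a Xc (proj2_sig _) Ea Ea').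
    + destruct (leg1_leg2 _ _ a Xc' (proj2_sig _) Ea' Ea).
    + set (u := exist _ b h) in Ea. set (u' := exist _ b' h') in Ea'.
      assert (g u = g u') as E%g_inj.
      { apply (eq_sig_hprop (fun _ => proof_irrelevance _)).
        apply (maximal_disjoint_eq X_max _ _ a (proj2_sig _) (proj2_sig _));
          unfold on_cherry; auto. }
      exact (f_equal (@proj1_sig _ _) E).
Qed.

Lemma node_neighbours_infinite w :
  is_inr w -> ~ finite_set (fun v => is_inl v /\ node_adj v w).
Proof.
  destruct w as [c | [b [Bb nb]]]; [contradiction |]. intros _ Hfin.
  destruct AB_barricade as (_ & _ & _ & _ & B_inf). apply (B_inf b Bb).
  apply finite_set_subset with (T := fun a =>
    (exists w, (is_inl w /\ node_adj w (inr (exist _ b (conj Bb nb)))) /\ merged w a) \/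
    (A a /\ adjH a b /\ ~ covered a)).
  - intros a [Aa ab].
    destruct (classic (covered a)) as [[c [Xc Hc]] | na]; [left | right; auto].
    exists (inl (exist _ c Xc)). split; [| exact Hc].
    split; [exact I |]. split; [left; split; exact I |].
    exists a, b. split; [exact Hc | split; [reflexivity | exact ab]].
  - apply finite_set_union.
    + apply finite_set_bigcup; [exact Hfin | intros; apply merged_finite].
    + apply finite_set_subsingleton.
      intros a a' (Aa & ab & na) (Aa' & a'b & na').
      exact (uncovered_neighbour_unique Bb nb Aa na ab Aa' na' a'b).
Qed.

Lemma node_barricade :
  barricade node_adj (@is_inl packed uncovered) (@is_inr packed uncovered).
Proof.
  assert (not_le : ~ card_le (@is_inr packed uncovered) (@is_inl packed uncovered)).
  { intros [g g_inj]%card_le_inr_inl.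
    destruct AB_barricade as (_ & _ & _ & [_ not_BA] & _).
    exact (not_BA (card_le_of_uncovered_inj g g_inj)). }
  split; [| split; [| split; [| split]]].
  - intros [c | b]; simpl; auto.
  - intros [c | b]; simpl; tauto.
  - intros w1 w2 [Hside _]. exact Hside.
  - split; [| exact not_le].
    destruct (card_le_total (@is_inl packed uncovered) (@is_inr packed uncovered)); tauto.
  - exact node_neighbours_infinite.
Qed.

End CherryContraction.

Theorem lemma5p3 (V : Type) (adj : V -> V -> Prop) (HG : simple_graph adj)
  (U : V -> Prop)
  (W : Type) (adjH : W -> W -> Prop) (HH : simple_graph adjH)
  (br : W -> V -> Prop) (A B : W -> Prop) :
  minor_model adj adjH br ->
  (forall w, countable_set (br w)) ->
  barricade adjH A B ->
  (forall b, B b -> exists u, U u /\ br b u) ->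
  exists (W' : Type) (adjH' : W' -> W' -> Prop) (br' : W' -> V -> Prop),
    simple_graph adjH' /\ minor_model adj adjH' br' /\
    (forall w, countable_set (br' w)) /\ rooted U br' /\ is_barricade adjH'.
Proof.
  intros br_model br_countable AB_barricade B_rooted.
  destruct HH as [adjH_sym _].
  destruct (classical_sets.ex_maximal_disjoint_subcollection
              (@on_cherry W) (is_cherry adjH A B)) as [X X_max].
  exists (node B X), (@node_adj W adjH B X),
    (fun w v => exists x, @merged W B X w x /\ br x v).
  split; [| split; [| split; [| split]]].
  - exact (node_adj_simple adjH B adjH_sym X).
  - apply minor_model_trans with (adjH := adjH); [exact br_model |].
    exact (merged_minor_model adjH_sym X_max).
  - intro w. apply countable_set_bigcup; [apply countable_set_finite, merged_finite | auto].
  - intro w. destruct (merged_meets_B X_max w) as [x [Bx Hx]].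
    destruct (B_rooted x Bx) as [u [Uu Hu]]. exists u. split; [exact Uu | exists x; auto].
  - exists (@is_inl (packed X) (uncovered B X)), (@is_inr (packed X) (uncovered B X)).
    exact (node_barricade AB_barricade X_max).
Qed.
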